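(* For any composition $\alpha$ of a positive integer $n$, \[\sum_{j=0}^{\lfloor n/2\rfloor}(-1)^{\ell_+^{2j}(\alpha)+r_-^{2j}(\alpha)}\,C\bigl(\ell_+^{2j}(\alpha),\,j-\ell_+^{2j}(\alpha)\bigr)\,C\bigl(r_-^{2j}(\alpha),\,\lfloor n/2\rfloor-j-r_-^{2j}(\alpha)\bigr)=\begin{cases}4^{\lfloor n/2\rfloor}&\text{if }\alpha=(n),\\0&\text{otherwise,}\end{cases}\] and \[\sum_{i=0}^n\frac{(-1)^{\ell_-^i(\alpha)+r_-^i(\alpha)+i}}{4^{\lfloor i/2\rfloor+\lfloor (n-i)/2\rfloor}}\,C\bigl(\ell_-^i(\alpha),\,\lfloor i/2\rfloor-\ell_-^i(\alpha)\bigr)\,C\bigl(r_-^i(\alpha),\,\lfloor (n-i)/2\rfloor-r_-^i(\alpha)\bigr)=0.\]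
   Context: A composition $\alpha=(a_1,\ldots,a_k)$ of $n$ is a sequence of positive integers with sum $n$; it corresponds bijectively to its descent set $D(\alpha)=\{a_1,a_1+a_2,\ldots,a_1+\cdots+a_{k-1}\}\subseteq\{1,\ldots,n-1\}$. For $0\le i\le n$, let $L_i(\alpha)$ be the composition of $i$ with descent set $D(\alpha)\cap\{1,\ldots,i-1\}$ and $R_i(\alpha)$ the composition of $n-i$ with descent set $\{d-i: d\in D(\alpha),\ d>i\}$ (so $L_0(\alpha)=R_n(\alpha)=()$, the empty composition); these are the two pieces obtained by cutting the ribbon diagram of $\alpha$ after its first $i$ cells. Statistics: $p_-(\beta)=\#\{i\ne k: b_i>1\}$ for $\beta=(b_1,\ldots,b_k)$; $p_+(\beta)=1+\#\{i\ne1,k: b_i>1\}$ if $k>1$ and $p_+(\beta)=0$ if $k\le1$. Set $\ell_\pm^i(\alpha)=p_\pm(L_i(\alpha))$ and $r_\pm^i(\alpha)=p_\pm(R_i(\alpha))$. $C(p,q)=\frac{(2p)!(2q)!}{p!(p+q)!q!}$. *)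

From mathcomp Require Import all_boot all_order all_algebra.
Set Implicit Arguments. Unset Strict Implicit. Unset Printing Implicit Defensive.
Import GRing.Theory Num.Theory.

Definition is_composition (n : nat) (a : seq nat) : Prop :=
  all (fun x => 0 < x) a /\ sumn a = n.

Definition descents (a : seq nat) : seq nat :=
  [seq sumn (take k a) | k <- iota 1 (size a).-1].

(* The composition of m whose descent set is D (D a subset of {1,...,m-1}).
   For m = 0 this is the empty composition. *)
Definition comp_of_descents (m : nat) (D : seq nat) : seq nat :=
  if m == 0 then [::]
  else pairmap (fun x y => y - x) 0 (rcons (sort leq (undup D)) m).

(* L_i(alpha): composition of i with descent set D(alpha) ∩ {1,...,i-1}. *)
Definition Lcut (i : nat) (a : seq nat) : seq nat :=
  comp_of_descents i [seq d <- descents a | (0 < d) && (d < i)].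

(* R_i(alpha): composition of n-i with descent set {d - i : d in D(alpha), d > i}. *)
Definition Rcut (i : nat) (a : seq nat) : seq nat :=
  comp_of_descents (sumn a - i) [seq d - i | d <- descents a & i < d].

Definition p_minus (b : seq nat) : nat :=
  count (fun x => 1 < x) (take (size b).-1 b).

Definition p_plus (b : seq nat) : nat :=
  if 1 < size b then (count (fun x => 1 < x) (drop 1 (take (size b).-1 b))).+1
  else 0.

Definition lplus i a := p_plus (Lcut i a).
Definition lminus i a := p_minus (Lcut i a).
Definition rplus i a := p_plus (Rcut i a).
Definition rminus i a := p_minus (Rcut i a).

Definition superC (p q : nat) : rat :=
  ((p.*2)`! * (q.*2)`!)%:R / (p`! * (p + q)`! * q`!)%:R.

From mathcomp Require Import all_boot all_order all_algebra.
From mathcomp Require Import zify ring.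
Set Implicit Arguments. Unset Strict Implicit. Unset Printing Implicit Defensive.
Import GRing.Theory Num.Theory.

(* Let g p N := (-1)^p C(p, N - p) / 4^N. The recurrence
   C(p+1, q) + C(p, q+1) = 4 C(p, q) says that g (p+1) is the backward difference
   of g p, starting from g 0 N = 'C(2N, N) / 4^N, whose self-convolution is
   identically 1. After normalisation, both sums are sums over cuts i of
   w(i) g(l(i), i/2) g(r(i), (n-i)/2), where l(i) and r(i) count the marks of
   the composition lying left and right of the cut: a mark sits just before each
   descent closing a part of size > 1 (and, for the first sum, before the first
   descent). Marks are at distance at least 2 from each other, and for a
   2-periodic weight w removing the last mark turns the sum for n into the
   difference of the sums for n and n - 2. Induction on the number of marks
   reduces both identities to the unmarked case, i.e. to the convolution. *)

(* A mark q stands for the descent q + 1: seen from the cut after i cells it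
   lies on the left if q + 1 < i, on the right if q + 1 > i + 1, and on
   neither side if it is one of the two descents i, i + 1 adjacent to the cut. *)
Definition nleft (Q : seq nat) (i : nat) : nat := count (fun q => q.+2 <= i) Q.
Definition nright (Q : seq nat) (i : nat) : nat := count (fun q => i < q) Q.

Definition gapped (Q : seq nat) : bool := pairwise (fun x y => x.+2 <= y) Q.

Lemma nleft_rcons (Q : seq nat) (q i : nat) :
  nleft (rcons Q q) i = nleft Q i + (q.+2 <= i).
Proof. by rewrite /nleft -cats1 count_cat /= addn0. Qed.

Lemma nright_rcons (Q : seq nat) (q i : nat) :
  nright (rcons Q q) i = nright Q i + (i < q).
Proof. by rewrite /nright -cats1 count_cat /= addn0. Qed.

Lemma nleft_above (Q : seq nat) (q i : nat) :
  all (fun x => x.+2 <= q) Q -> q <= i -> nleft Q i = size Q.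
Proof.
move=> Q_below le_qi; rewrite /nleft -[RHS]count_predT.
by apply: eq_in_count => x /(allP Q_below) /=; lia.
Qed.

Lemma nright_above (Q : seq nat) (q i : nat) :
  all (fun x => x.+2 <= q) Q -> q <= i -> nright Q i = 0.
Proof.
move=> Q_below le_qi; apply/eqP; rewrite -leqn0 leqNgt -has_count; apply/hasPn => x.
by move/(allP Q_below) => /=; lia.
Qed.

Lemma gapped_rcons (Q : seq nat) (q : nat) :
  gapped (rcons Q q) = gapped Q && all (fun x => x.+2 <= q) Q.
Proof. by rewrite /gapped pairwise_rcons andbC. Qed.

Lemma gapped_size (Q : seq nat) (lo hi : nat) :
  gapped Q -> all (fun x => (lo <= x) && (x.+2 <= hi)) Q -> size Q <= (hi - lo)./2.
Proof.
elim: Q lo => [//|x Q IH] lo /= /andP[x_below gQ] /andP[/andP[le_lox le_x2hi] Q_in].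
have Q_in' : all (fun y => (x.+2 <= y) && (y.+2 <= hi)) Q.
  by apply/allP => y Qy; rewrite (allP x_below y Qy); case/andP: (allP Q_in y Qy).
by have := IH x.+2 gQ Q_in'; rewrite -!divn2; lia.
Qed.

Lemma nleft_le_half (Q : seq nat) (i : nat) : gapped Q -> nleft Q i <= i./2.
Proof.
move=> gQ; rewrite /nleft -size_filter -[i in i./2]subn0.
apply: gapped_size; first exact: pairwise_filter.
by apply/allP => x; rewrite mem_filter => /andP[-> _].
Qed.

Lemma nright_le_half (n : nat) (Q : seq nat) (i : nat) :
  gapped Q -> all (fun x => x.+2 <= n) Q -> nright Q i <= (n - i)./2.
Proof.
move=> gQ Q_le; rewrite /nright -size_filter.
apply: (@leq_trans (n - i.+1)./2); last by rewrite -!divn2; lia.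
apply: gapped_size; first exact: pairwise_filter.
by apply/allP => x; rewrite mem_filter => /andP[-> Qx]; rewrite (allP Q_le x Qx).
Qed.

Lemma count_gt1_pairmap (x0 : nat) (s : seq nat) : pairwise ltn (x0 :: s) ->
  count (fun y => 1 < y) (pairmap (fun x y => y - x) x0 s) =
  count (fun d => d.-1 \notin x0 :: s) s.
Proof.
elim: s x0 => [//|d s IH] x0 /= /andP[/andP[lt_x0d x0_lt] /andP[d_lt ds_inc]].
have d1_notin_s : d.-1 \notin s by apply/negP => /(allP d_lt) /=; lia.
rewrite IH /= ?d_lt // !inE (negbTE d1_notin_s) orbF; congr (_ + _)%N; first lia.
apply: eq_in_count => e s_e /=; rewrite !inE.
by move: (allP d_lt e s_e) (allP x0_lt e s_e) => /= *; rewrite (_ : e.-1 == x0 = false) //; lia.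
Qed.

Lemma comp_of_descentsE (m : nat) (D : seq nat) : m != 0 -> pairwise ltn D ->
  comp_of_descents m D = pairmap (fun x y => y - x) 0 (rcons D m).
Proof.
move=> m_neq0 D_inc; rewrite /comp_of_descents (negbTE m_neq0).
have D_sorted : sorted ltn D by rewrite sorted_pairwise //; exact: ltn_trans.
move: (D_sorted); rewrite ltn_sorted_uniq_leq => /andP[D_uniq D_le].
by rewrite undup_id // sorted_sort //; exact: leq_trans.
Qed.

Lemma pairmap_rcons_take (x0 : nat) (D : seq nat) (m : nat) :
  take (size D) (pairmap (fun x y => y - x) x0 (rcons D m)) =
  pairmap (fun x y => y - x) x0 D.
Proof. by rewrite -cats1 pairmap_cat take_size_cat // size_pairmap. Qed.

Lemma p_minus_comp_of_descents (m : nat) (D : seq nat) :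
  pairwise ltn (0 :: D) -> all (fun d => d < m) D ->
  p_minus (comp_of_descents m D) = count (fun d => d.-1 \notin 0 :: D) D.
Proof.
case: (posnP m) => [-> | m_gt0] D_inc D_lt; first by case: D D_lt {D_inc}.
rewrite comp_of_descentsE -?lt0n //; last by case/andP: D_inc.
by rewrite /p_minus size_pairmap size_rcons pairmap_rcons_take count_gt1_pairmap.
Qed.

Lemma p_plus_comp_of_descents (m : nat) (D : seq nat) :
  pairwise ltn (0 :: D) -> all (fun d => d < m) D ->
  p_plus (comp_of_descents m D) = count (fun d => d.-1 \notin D) D.
Proof.
case: (posnP m) => [-> | m_gt0] D_inc D_lt; first by case: D D_lt {D_inc}.
rewrite comp_of_descentsE -?lt0n //; last by case/andP: D_inc.
rewrite /p_plus size_pairmap size_rcons pairmap_rcons_take.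
case: D D_inc {D_lt} => [//|d D'] /= /andP[/andP[d_gt0 _] /andP[d_lt D'_inc]].
rewrite drop0 count_gt1_pairmap /= ?d_lt // inE.
have d1_notin : d.-1 \notin D' by apply/negP => /(allP d_lt) /=; lia.
by rewrite (negbTE d1_notin) (_ : d.-1 == d = false) //; lia.
Qed.

Lemma descents_cons (x : nat) (a : seq nat) :
  descents (x :: a) = if a is [::] then [::] else x :: [seq x + d | d <- descents a].
Proof.
case: a => [//|y a]; rewrite /descents /= addn0; congr (_ :: _).
by rewrite (iotaDl 1 1) -!map_comp; apply: eq_map => k /=; rewrite add0n.
Qed.

Lemma descents_bounds (a : seq nat) : all (fun x => 0 < x) a ->
  pairwise ltn (0 :: descents a) && all (fun d => d < sumn a) (descents a).
Proof.
elim: a => [//|x a IH] /= /andP[x_gt0 a_pos]; rewrite descents_cons.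
case: a IH a_pos => [//|y a] IH a_pos.
have y_gt0 : 0 < y by case/andP: a_pos.
move: (IH a_pos); set D := descents _; clearbody D.
rewrite /= => /andP[/andP[D_pos D_inc] D_lt].
rewrite !all_map pairwise_map /= x_gt0 /=.
apply/and3P; split; [apply/and3P; split | lia |].
- by apply/allP => d _ /=; lia.
- by apply/allP => d /(allP D_pos) /=; lia.
- by apply: sub_pairwise D_inc => u v /=; lia.
- by apply/allP => d /(allP D_lt) /=; lia.
Qed.

Lemma pairwise_cons_filter (T : eqType) (r : rel T) (x : T) (s : seq T) (P : pred T) :
  pairwise r (x :: s) -> pairwise r (x :: [seq y <- s | P y]).
Proof. by apply: subseq_pairwise; rewrite /= eqxx filter_subseq. Qed.

Section DescentCounts.

Variable a : seq nat.
Hypothesis a_pos : all (fun x => 0 < x) a.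
Local Notation D := (descents a).

Lemma descents_inc : pairwise ltn (0 :: D).
Proof. by case/andP: (descents_bounds a_pos). Qed.

Lemma descents_lt : all (fun d => d < sumn a) D.
Proof. by case/andP: (descents_bounds a_pos). Qed.

Lemma descents_gt0 : all (fun d => 0 < d) D.
Proof. by case/andP: descents_inc. Qed.

Lemma lminus_count (i : nat) :
  lminus i a = count (fun d => (d < i) && (d.-1 \notin 0 :: D)) D.
Proof.
rewrite /lminus /Lcut p_minus_comp_of_descents; last 2 first.
- exact: pairwise_cons_filter descents_inc.
- by rewrite all_filter; apply/allP => d _ /=; apply/implyP => /andP[].
rewrite count_filter; apply: eq_in_count => d D_d /=.
move: (allP descents_gt0 d D_d); rewrite !inE mem_filter /=.
by case D_d1: (d.-1 \in D); move: (allP descents_gt0 d.-1); rewrite D_d1 /=; lia.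
Qed.

Lemma lplus_count (i : nat) :
  lplus i a = count (fun d => (d < i) && (d.-1 \notin D)) D.
Proof.
rewrite /lplus /Lcut p_plus_comp_of_descents; last 2 first.
- exact: pairwise_cons_filter descents_inc.
- by rewrite all_filter; apply/allP => d _ /=; apply/implyP => /andP[].
rewrite count_filter; apply: eq_in_count => d D_d /=.
move: (allP descents_gt0 d D_d); rewrite mem_filter /=.
by case D_d1: (d.-1 \in D); move: (allP descents_gt0 d.-1); rewrite D_d1 /=; lia.
Qed.

Lemma rminus_count (i : nat) :
  rminus i a = count (fun d => (i.+1 < d) && (d.-1 \notin D)) D.
Proof.
have D_inc : pairwise ltn D by case/andP: descents_inc.
set DR := [seq d - i | d <- D & i < d].
have DR_inc : pairwise ltn (0 :: DR).
  rewrite /= pairwise_map all_map; apply/andP; split.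
    by apply/allP => d; rewrite mem_filter /= => /andP[lt_id _]; lia.
  apply: (sub_in_pairwise _ (filter_all _ _) (pairwise_filter _ D_inc)) => u v /=; lia.
have DR_lt : all (fun d => d < sumn a - i) DR.
  rewrite all_map; apply/allP => d; rewrite mem_filter => /andP[lt_id /(allP descents_lt)] /=.
  lia.
have mem_DR d : i < d -> ((d - i).-1 \in DR) = (d.-1 \in D) && (i < d.-1).
  move=> lt_id; apply/mapP/andP => [[e] | [D_d1 lt_id1]].
    by rewrite mem_filter => /andP[lt_ie D_e] eq_de; rewrite (_ : d.-1 = e) //; lia.
  by exists d.-1; rewrite ?mem_filter ?D_d1 ?lt_id1 //; lia.
rewrite /rminus /Rcut p_minus_comp_of_descents // count_map count_filter.
apply: eq_in_count => d D_d /=; rewrite inE.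
case: (ltnP i d) => [lt_id | le_di]; last by rewrite andbF; lia.
rewrite mem_DR // andbT.
by case: (d.-1 \in D); rewrite /=; lia.
Qed.

End DescentCounts.

Lemma descents_eq_nil (a : seq nat) (n : nat) : 0 < n -> sumn a = n ->
  (descents a == [::]) = (a == [:: n]).
Proof.
move=> n_gt0 sum_a; rewrite -size_eq0 /descents size_map size_iota.
case: a sum_a => [|x [|y a]] /= sum_a; first by lia.
  by rewrite addn0 in sum_a; rewrite sum_a !eqxx.
by rewrite eqseq_cons andbC.
Qed.

Definition marks (P : pred nat) (D : seq nat) : seq nat := [seq d.-1 | d <- D & P d].

Lemma nleft_marks (P : pred nat) (D : seq nat) (i : nat) : all (fun d => 0 < d) D ->
  nleft (marks P D) i = count (fun d => (d < i) && P d) D.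
Proof.
move=> D_pos; rewrite /nleft count_map count_filter; apply: eq_in_count => d D_d /=.
by move: (allP D_pos d D_d) => /=; case: (P d); rewrite ?andbF ?andbT //; lia.
Qed.

Lemma nright_marks (P : pred nat) (D : seq nat) (i : nat) :
  nright (marks P D) i = count (fun d => (i.+1 < d) && P d) D.
Proof.
rewrite /nright count_map count_filter; apply: eq_in_count => d _ /=.
by case: (P d); rewrite ?andbF ?andbT //; lia.
Qed.

Lemma gapped_marks (P : pred nat) (D : seq nat) : pairwise ltn (0 :: D) ->
  {in D, forall d, P d -> d.-1 \notin D} -> gapped (marks P D).
Proof.
move=> /= /andP[D_pos D_inc] P_gap; rewrite /gapped pairwise_map.
have D_P : all (fun d => (d \in D) && P d) [seq d <- D | P d].
  by apply/allP => d; rewrite mem_filter andbC.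
apply: (sub_in_pairwise _ D_P (pairwise_filter _ D_inc)) => u v /andP[D_u _] /andP[D_v P_v] /=.
have v1_neq_u : v.-1 != u by apply: contraNneq (P_gap v D_v P_v) => ->.
by move: (allP D_pos u D_u) => /=; lia.
Qed.

Lemma marks_le (P : pred nat) (D : seq nat) (n : nat) :
  all (fun d => 0 < d) D -> all (fun d => d < n) D -> all (fun x => x.+2 <= n) (marks P D).
Proof.
move=> D_pos D_lt; rewrite all_map; apply/allP => d; rewrite mem_filter => /andP[_ D_d] /=.
by move: (allP D_pos d D_d) (allP D_lt d D_d) => /=; lia.
Qed.

Section Marks.

Variable a : seq nat.
Hypothesis a_pos : all (fun x => 0 < x) a.
Local Notation D := (descents a).

(* For a = (a_1, ..., a_k) with partial sums d_j, the marks of [marks_minus a]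
   are the d_j - 1 with j < k and a_j > 1; [marks_plus a] also contains d_1 - 1. *)
Definition marks_minus : seq nat := marks (fun d => d.-1 \notin 0 :: D) D.
Definition marks_plus : seq nat := marks (fun d => d.-1 \notin D) D.

Lemma nleft_marks_minus (i : nat) : nleft marks_minus i = lminus i a.
Proof. by rewrite nleft_marks ?(descents_gt0 a_pos) // (lminus_count a_pos). Qed.

Lemma nleft_marks_plus (i : nat) : nleft marks_plus i = lplus i a.
Proof. by rewrite nleft_marks ?(descents_gt0 a_pos) // (lplus_count a_pos). Qed.

Lemma nright_marks_plus (i : nat) : nright marks_plus i = rminus i a.
Proof. by rewrite nright_marks (rminus_count a_pos). Qed.

Lemma nright_marks_minus (i : nat) : nright marks_minus i = rminus i a.
Proof.
rewrite nright_marks (rminus_count a_pos); apply: eq_count => d /=; rewrite inE.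
by case: ltnP => //= lt_i1d; rewrite (_ : d.-1 == 0 = false) //; lia.
Qed.

Lemma gapped_marks_minus : gapped marks_minus.
Proof. by apply: gapped_marks (descents_inc a_pos) _ => d _; rewrite inE negb_or => /andP[]. Qed.

Lemma gapped_marks_plus : gapped marks_plus.
Proof. exact: gapped_marks (descents_inc a_pos) _. Qed.

Lemma marks_minus_bounds : all (fun x => (0 < x) && (x.+2 <= sumn a)) marks_minus.
Proof.
rewrite /marks_minus all_map; apply/allP => d; rewrite mem_filter inE negb_or.
case/andP=> /andP[d1_neq0 _] D_d /=; move: (allP (descents_lt a_pos) d D_d) => /=; lia.
Qed.

Lemma marks_plus_bounds : all (fun x => x.+2 <= sumn a) marks_plus.
Proof. exact: marks_le (descents_gt0 a_pos) (descents_lt a_pos). Qed.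

Lemma marks_plus_eq_nil : (marks_plus == [::]) = (D == [::]).
Proof.
rewrite /marks_plus /marks; move: (descents_inc a_pos).
case: D => [//|d D'] /= /andP[/andP[d_gt0 _] /andP[d_lt _]].
have d1_notin : d.-1 \notin D' by apply/negP => /(allP d_lt) /=; lia.
by rewrite inE (negbTE d1_notin) (_ : d.-1 == d = false) //; lia.
Qed.

Lemma lplus_le_half (i : nat) : lplus i a <= i./2.
Proof. by rewrite -nleft_marks_plus nleft_le_half ?gapped_marks_plus. Qed.

Lemma lminus_le_half (i : nat) : lminus i a <= i./2.
Proof. by rewrite -nleft_marks_minus nleft_le_half ?gapped_marks_minus. Qed.

Lemma rminus_le_half (i : nat) : rminus i a <= (sumn a - i)./2.
Proof.
by rewrite -nright_marks_plus nright_le_half ?gapped_marks_plus ?marks_plus_bounds.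
Qed.

End Marks.

Local Open Scope ring_scope.

Lemma natr_fact_neq0 (n : nat) : n`!%:R != 0 :> rat.
Proof. by rewrite pnatr_eq0 -lt0n fact_gt0. Qed.

Lemma natrS_neq0 (n : nat) : n%:R + 1 != 0 :> rat.
Proof. by rewrite natr1 pnatr_eq0. Qed.

Lemma expr4_neq0 (n : nat) : 4%:R ^+ n != 0 :> rat.
Proof. by rewrite expf_neq0 // pnatr_eq0. Qed.

Lemma superC_rec (p q : nat) :
  superC p.+1 q + superC p q.+1 = 4%:R * superC p q.
Proof.
rewrite /superC !doubleS addSn addnS !factS -!muln2 !natrM -!natr1 !natrD !natrM.
have pq1 : p%:R + q%:R + 1 != 0 :> rat by rewrite -natrD natrS_neq0.
by field; rewrite !natr_fact_neq0 !natrS_neq0 pq1.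
Qed.

(* [superC 0 N] is the central binomial coefficient 'C(N.*2, N). *)
Definition ncbin (N : nat) : rat := superC 0 N / 4%:R ^+ N.

Lemma ncbinS (N : nat) : ncbin N.+1 * N.+1%:R * 2 = ncbin N * (N%:R * 2 + 1).
Proof.
rewrite /ncbin /superC !add0n doubleS !factS -!muln2 !natrM -!natr1 exprS.
by field; rewrite natr_fact_neq0 natrS_neq0 expr4_neq0.
Qed.

(* With T h the convolution and W h its first moment, symmetry gives
   2 W h = h T h while [ncbinS] gives 2 W (h+1) = 2 W h + T h; so T is constant. *)
Lemma ncbin_conv (h : nat) : \sum_(0 <= j < h.+1) ncbin j * ncbin (h - j) = 1.
Proof.
pose T k := \sum_(0 <= j < k.+1) ncbin j * ncbin (k - j).
pose W k := \sum_(0 <= j < k.+1) j%:R * (ncbin j * ncbin (k - j)).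
have W_sym k : 2 * W k = k%:R * T k.
  have W_rev : W k = \sum_(0 <= j < k.+1) (k - j)%:R * (ncbin j * ncbin (k - j)).
    rewrite /W big_nat_rev; apply: eq_big_nat => j /andP[_ lt_jk].
    have le_jk : (j <= k)%N by rewrite -ltnS.
    by rewrite add0n subSS subKn // [ncbin _ * ncbin j]mulrC.
  rewrite -natr1 mulrDl mul1r {2}W_rev /W -big_split mulr_sumr.
  apply: eq_big_nat => j /andP[_ lt_jk] /=.
  by rewrite -mulrDl -natrD subnKC // -ltnS.
have W_succ k : 2 * W k.+1 = 2 * W k + T k.
  rewrite /W big_nat_recl // mul0r add0r /T !mulr_sumr -big_split.
  apply: eq_big_nat => j _ /=; rewrite subSS.
  transitivity (ncbin j.+1 * j.+1%:R * 2 * ncbin (k - j)); first by ring.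
  by rewrite ncbinS; ring.
have T_succ k : T k.+1 = T k.
  by apply: (mulfI (natrS_neq0 k)); rewrite natr1 -W_sym W_succ W_sym -natr1; ring.
elim: h => [|h IH]; first by rewrite big_nat1 /ncbin /superC.
by rewrite -[RHS]IH -/(T h.+1) T_succ.
Qed.

Definition bdiff (f : nat -> rat) (N : nat) : rat :=
  f N - (if N is N'.+1 then f N' else 0).

(* Defined as an iterated difference so that the recurrence [superCnSS] holds
   without side conditions. *)
Definition superCn (p : nat) : nat -> rat := iter p bdiff ncbin.

Lemma superCnSS (p N : nat) : superCn p.+1 N.+1 = superCn p N.+1 - superCn p N.
Proof. by []. Qed.

Lemma superCnE (p N : nat) : (p <= N)%N ->
  superCn p N = (-1) ^+ p * superC p (N - p) / 4%:R ^+ N.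
Proof.
elim: p N => [|p IH] [|N] // le_pN; first by rewrite expr0 mul1r subn0.
rewrite ltnS in le_pN.
rewrite superCnSS !IH ?(leqW le_pN) // subSS subSn //.
have -> : superC p.+1 (N - p) = 4%:R * superC p (N - p) - superC p (N - p).+1.
  by rewrite -superC_rec addrK.
by rewrite !exprS; field; rewrite expr4_neq0.
Qed.

Lemma superCn_mul (p N r M : nat) : (p <= N)%N -> (r <= M)%N ->
  superCn p N * superCn r M =
  (-1) ^+ (p + r) * superC p (N - p) * superC r (M - r) / 4%:R ^+ (N + M).
Proof.
move=> le_pN le_rM; rewrite !superCnE // !exprD.
by field; rewrite !expr4_neq0.
Qed.

Definition cut_sum (w : nat -> rat) (n : nat) (Q : seq nat) : rat :=
  \sum_(0 <= i < n.+1)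
     w i * superCn (nleft Q i) i./2 * superCn (nright Q i) (n - i)./2.

Lemma sum_nat_parity (F : nat -> rat) (n : nat) :
  \sum_(0 <= i < n) F i =
  \sum_(0 <= j < uphalf n) F j.*2 + \sum_(0 <= j < n./2) F j.*2.+1.
Proof.
elim: n F => [|n IH] F; first by rewrite !big_geq.
by rewrite big_nat_recl // IH /= big_nat_recl // addrCA addrC.
Qed.

Lemma half_subn_double (n j : nat) : ((n - j.*2)./2 = n./2 - j)%N.
Proof. by rewrite -!divn2 -muln2; lia. Qed.

Lemma cut_sum_even (n : nat) (Q : seq nat) :
  cut_sum (fun i => (~~ odd i)%:R) n Q =
  \sum_(0 <= j < (n./2).+1) superCn (nleft Q j.*2) j * superCn (nright Q j.*2) (n./2 - j).
Proof.
rewrite /cut_sum sum_nat_parity [X in _ + X]big1 => [|j _]; last first.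
  by rewrite /= odd_double !mul0r.
rewrite addr0; apply: eq_bigr => j _.
by rewrite odd_double mul1r doubleK half_subn_double.
Qed.

Lemma cut_sum_nil_even (n : nat) : cut_sum (fun i => (~~ odd i)%:R) n [::] = 1.
Proof. by rewrite cut_sum_even ncbin_conv. Qed.

Lemma cut_sum_nil_alt (n : nat) : cut_sum (fun i => (-1) ^+ i) n [::] = (n == 0)%:R.
Proof.
rewrite /cut_sum sum_nat_parity /=.
under eq_bigr do rewrite -signr_odd odd_double mul1r doubleK half_subn_double.
under [X in _ + X]eq_bigr do rewrite -signr_odd /= odd_double expr1 mulN1r mulNr
  uphalf_double subnS predn_sub half_subn_double.
rewrite sumrN ncbin_conv; case: n => [|m]; first by rewrite big_geq ?subr0.
by rewrite /= ncbin_conv subrr.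
Qed.

Lemma cut_sum_rcons (w : nat -> rat) (m q : nat) (Q : seq nat) :
  (forall i, w i.+2 = w i) -> all (fun x => x.+2 <= q)%N Q -> (q <= m)%N ->
  cut_sum w m.+2 (rcons Q q) = cut_sum w m.+2 Q - cut_sum w m Q.
Proof.
move=> w_period2 Q_below le_qm.
pose T n X i := w i * superCn (nleft X i) i./2 * superCn (nright X i) (n - i)./2.
have split_low n X : (q <= n)%N ->
    cut_sum w n X = \sum_(0 <= i < q) T n X i + \sum_(q <= i < n.+1) T n X i.
  by move=> le_qn; rewrite -big_cat_nat // leqW.
have split_high X : \sum_(q <= i < m.+3) T m.+2 X i =
    \sum_(q <= i < q.+2) T m.+2 X i + \sum_(q <= i < m.+1) T m.+2 X i.+2.
  have shift : \sum_(q.+2 <= i < m.+3) T m.+2 X i = \sum_(q <= i < m.+1) T m.+2 X i.+2.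
    by rewrite -(addn2 q) big_addn subn2; apply: eq_bigr => i _; rewrite addn2.
  by rewrite -shift -big_cat_nat //; lia.
have low : \sum_(0 <= i < q) T m.+2 (rcons Q q) i =
    \sum_(0 <= i < q) T m.+2 Q i - \sum_(0 <= i < q) T m Q i.
  rewrite -sumrB; apply: eq_big_nat => i /andP[_ lt_iq].
  rewrite /T nleft_rcons nright_rcons lt_iq (_ : q.+2 <= i = false)%N; last by lia.
  rewrite addn0 addn1 (_ : m.+2 - i = (m - i).+2)%N; last by lia.
  by rewrite superCnSS; ring.
have mid : \sum_(q <= i < q.+2) T m.+2 (rcons Q q) i = \sum_(q <= i < q.+2) T m.+2 Q i.
  apply: eq_big_nat => i /andP[le_qi lt_iq2].
  rewrite /T nleft_rcons nright_rcons (_ : q.+2 <= i = false)%N; last by lia.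
  by rewrite (_ : i < q = false)%N ?addn0 //; lia.
have high : \sum_(q <= i < m.+1) T m.+2 (rcons Q q) i.+2 =
    \sum_(q <= i < m.+1) T m.+2 Q i.+2 - \sum_(q <= i < m.+1) T m Q i.
  rewrite -sumrB; apply: eq_big_nat => i /andP[le_qi _].
  have le_qi2 : (q <= i.+2)%N by lia.
  rewrite /T nleft_rcons nright_rcons !(nright_above Q_below) // !(nleft_above Q_below) //.
  rewrite (_ : q.+2 <= i.+2 = true)%N // (_ : i.+2 < q = false)%N; last by lia.
  by rewrite addn1 add0n w_period2 !subSS (superCnSS _ i./2); ring.
have le_qm2 : (q <= m.+2)%N by lia.
by rewrite !split_low // !split_high low mid high; ring.
Qed.

Lemma cut_sum_even_gapped (n : nat) (Q : seq nat) :
  gapped Q -> all (fun x => x.+2 <= n)%N Q ->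
  cut_sum (fun i => (~~ odd i)%:R) n Q = (Q == [::])%:R.
Proof.
elim/last_ind: Q n => [|Q q IH] n; first by rewrite cut_sum_nil_even.
rewrite gapped_rcons all_rcons => /andP[gQ Q_below] /andP[le_q2n Q_le].
case: n le_q2n Q_le => [|[|m]] // le_qm Q_le.
rewrite cut_sum_rcons //; last by move=> i; rewrite /= negbK.
rewrite !IH //; last by apply: sub_all Q_below => x /=; lia.
by rewrite subrr; case: Q {IH gQ Q_below Q_le}.
Qed.

Lemma cut_sum_alt_gapped (n : nat) (Q : seq nat) :
  gapped Q -> all (fun x => (0 < x) && (x.+2 <= n))%N Q ->
  cut_sum (fun i => (-1) ^+ i) n Q = (n == 0)%:R.
Proof.
elim/last_ind: Q n => [|Q q IH] n; first by rewrite cut_sum_nil_alt.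
rewrite gapped_rcons all_rcons => /andP[gQ Q_below] /andP[/andP[q_gt0 le_q2n] Q_le].
case: n le_q2n Q_le => [|[|m]] // le_qm Q_le.
rewrite cut_sum_rcons //; last by move=> i; rewrite !exprS mulrA mulrNN mulr1 mul1r.
rewrite !IH //; last first.
  by apply/allP => x Qx; move: (allP Q_below x Qx) (allP Q_le x Qx) => /=; lia.
by rewrite (_ : m == 0 = false)%N ?subr0 //; lia.
Qed.

Theorem proposition6p1 (n : nat) (a : seq nat) :
  (0 < n)%N -> is_composition n a ->
  (\sum_(0 <= j < (n./2).+1)
      (-1) ^+ (lplus j.*2 a + rminus j.*2 a)
      * superC (lplus j.*2 a) (j - lplus j.*2 a)
      * superC (rminus j.*2 a) (n./2 - j - rminus j.*2 a)
   = if a == [:: n] then 4%:R ^+ n./2 else 0 :> rat)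
  /\
  (\sum_(0 <= i < n.+1)
      (-1) ^+ (lminus i a + rminus i a + i) / 4%:R ^+ (i./2 + (n - i)./2)
      * superC (lminus i a) (i./2 - lminus i a)
      * superC (rminus i a) ((n - i)./2 - rminus i a)
   = 0 :> rat).
Proof.
move=> n_gt0 [a_pos sum_a]; split.
- have bounds := marks_plus_bounds a_pos; rewrite sum_a in bounds.
  have -> : (if a == [:: n] then 4%:R ^+ n./2 else 0) =
      4%:R ^+ n./2 * cut_sum (fun i => (~~ odd i)%:R) n (marks_plus a).
    rewrite cut_sum_even_gapped ?gapped_marks_plus // marks_plus_eq_nil //.
    by rewrite (descents_eq_nil n_gt0 sum_a); case: eqP; rewrite ?mulr1 ?mulr0.
  rewrite cut_sum_even mulr_sumr; apply: eq_big_nat => j /andP[_ lt_jh].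
  have := lplus_le_half a_pos j.*2; have := rminus_le_half a_pos j.*2.
  rewrite doubleK sum_a half_subn_double nleft_marks_plus // nright_marks_plus // => le_r le_l.
  have le_jh : (j <= n./2)%N by rewrite -ltnS.
  by rewrite superCn_mul // (subnKC le_jh) [RHS]mulrC divfK ?expr4_neq0.
- have bounds := marks_minus_bounds a_pos; rewrite sum_a in bounds.
  transitivity (cut_sum (fun i => (-1) ^+ i) n (marks_minus a)); last first.
    by rewrite cut_sum_alt_gapped ?gapped_marks_minus // (_ : (n == 0)%N = false) //; lia.
  apply: eq_big_nat => i /andP[_ lt_in].
  have := lminus_le_half a_pos i; have := rminus_le_half a_pos i.
  rewrite sum_a nleft_marks_minus // nright_marks_minus // => le_r le_l.
  by rewrite -[RHS]mulrA superCn_mul // exprD; ring.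
Qed.
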